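(* Under the standing assumptions, let $\vec v$ be a demand vector, let $(\vec v,\vec v_1)$ be an $(s,t_1)$-adjacent pair with switching cost $2$ and intermediate task $i_1$, and let $(\vec v,\vec v_2)$ be an $(s,t_2)$-adjacent pair with switching cost $2$ and intermediate task $i_2$. Then the tasks $s,i_1,t_1,i_2,t_2$ are not all distinct.
   Context: Standing assumptions: $n\ge 4$, $k\ge 5$, and $f_1,\dots,f_n$ are functions from demand vectors to $[k]$ satisfying the demand (for every demand vector $\vec v$ and task $j$, exactly $v_j$ agents $a$ have $f_a(\vec v)=j$), with maximum switching cost at most $2$. A demand vector is $\vec v=(v_1,\dots,v_k)$ of non-negative integers with $\sum v_j=n$. The switching cost of $(\vec v,\vec v')$ is the number of agents $a$ with $f_a(\vec v)\ne f_a(\vec v')$; $\vec v,\vec v'$ are adjacent if $\|\vec v-\vec v'\|_1=2$. An ordered pair $(\vec v_1,\vec v_2)$ is $(s,t)$-adjacent if $s\ne t$ and $\vec v_2$ is obtained from $\vec v_1$ by moving one unit of demand from task $s$ to task $t$. Agent $a$ is $(i,j)$-mobile with respect to $(\vec v_1,\vec v_2)$ if $f_a(\vec v_1)=i$, $f_a(\vec v_2)=j$, $i\ne j$. If $(\vec v_1,\vec v_2)$ is $(s,t)$-adjacent with switching cost $2$, then there is a task $i\notin\{s,t\}$ such that one switching agent is $(s,i)$-mobile and the other is $(i,t)$-mobile; $i$ is called the intermediate task of $(\vec v_1,\vec v_2)$. *)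

From mathcomp Require Import all_boot.
Set Implicit Arguments. Unset Strict Implicit. Unset Printing Implicit Defensive.

(* Agents are 'I_n, tasks are 'I_k.  An assignment is
   f : 'I_n -> {ffun 'I_k -> nat} -> 'I_k  (f a v = task of agent a at v);
   only its values on demand vectors matter. *)

Definition demand_vec (n k : nat) (v : {ffun 'I_k -> nat}) : bool :=
  (\sum_(j < k) v j == n).

Definition satisfies_demand (n k : nat) (f : 'I_n -> {ffun 'I_k -> nat} -> 'I_k) : Prop :=
  forall v, demand_vec n v -> forall j : 'I_k, #|[set a | f a v == j]| = v j.

Definition switching_cost (n k : nat) (f : 'I_n -> {ffun 'I_k -> nat} -> 'I_k)
  (v v' : {ffun 'I_k -> nat}) : nat := #|[set a | f a v != f a v']|.

Definition l1dist (k : nat) (v v' : {ffun 'I_k -> nat}) : nat :=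
  \sum_(j < k) ((v j - v' j) + (v' j - v j)).

Definition adjacent (k : nat) (v v' : {ffun 'I_k -> nat}) : bool := l1dist v v' == 2.

Definition max_switching_cost_le (n k : nat) (f : 'I_n -> {ffun 'I_k -> nat} -> 'I_k)
  (c : nat) : Prop :=
  forall v v', demand_vec n v -> demand_vec n v' -> adjacent v v' ->
    switching_cost f v v' <= c.

Definition st_adjacent (k : nat) (s t : 'I_k) (v1 v2 : {ffun 'I_k -> nat}) : Prop :=
  s != t /\ 0 < v1 s /\ v2 s = (v1 s).-1 /\ v2 t = (v1 t).+1 /\
  (forall j, j != s -> j != t -> v2 j = v1 j).

Definition mobile (n k : nat) (f : 'I_n -> {ffun 'I_k -> nat} -> 'I_k) (a : 'I_n)
  (i j : 'I_k) (v1 v2 : {ffun 'I_k -> nat}) : Prop :=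
  f a v1 = i /\ f a v2 = j /\ i != j.

Definition intermediate_task (n k : nat) (f : 'I_n -> {ffun 'I_k -> nat} -> 'I_k)
  (s t i : 'I_k) (v1 v2 : {ffun 'I_k -> nat}) : Prop :=
  i != s /\ i != t /\
  exists a b : 'I_n, a != b /\ mobile f a s i v1 v2 /\ mobile f b i t v1 v2.

From mathcomp Require Import all_boot zify.

Set Implicit Arguments.
Unset Strict Implicit.
Unset Printing Implicit Defensive.

(* We show that already
   i1 <> i2 together with t1 <> t2 is contradictory, which is stronger than
   the claim that s,i1,t1,i2,t2 are not all distinct.

   - A pair of switching cost 2 with intermediate task i moves exactly one
     agent s -> i and one agent i -> t; every other agent keeps its task
     ([cost2_moves]).
   - If t1 <> t2 then (v1,v2) is (t1,t2)-adjacent, hence adjacent, so its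
     switching cost is at most 2.
   - But the (s,i1)-agent, the (i1,t1)-agent of the first detour and the
     (i2,t2)-agent of the second detour all change task between v1 and v2,
     and they are distinct since their tasks at v (s, i1, i2) are distinct;
     three switching agents contradict the bound 2. *)

Lemma card_ge3 (T : finType) (S : {set T}) (a b c : T) :
  a \in S -> b \in S -> c \in S -> a != b -> a != c -> b != c -> 3 <= #|S|.
Proof.
move=> aS bS cS ab ac bc.
have sub : [set a; b; c] \subset S.
  by apply/subsetP => x; rewrite !inE => /orP [/orP [] | ] /eqP ->.
apply: leq_trans (subset_leq_card sub).
by rewrite setUC cardsU1 cards2 ab !inE negb_or eq_sym ac eq_sym bc.
Qed.

Section Switching.

Variables (n k : nat) (f : 'I_n -> {ffun 'I_k -> nat} -> 'I_k).

Lemma switching_cost_ge3 (v w : {ffun 'I_k -> nat}) (a b c : 'I_n) :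
  f a v != f a w -> f b v != f b w -> f c v != f c w ->
  a != b -> a != c -> b != c -> 3 <= switching_cost f v w.
Proof. by move=> Ha Hb Hc; apply: card_ge3; rewrite inE. Qed.

Lemma cost2_fixes_others (v w : {ffun 'I_k -> nat}) (a b c : 'I_n) :
  switching_cost f v w = 2 -> a != b -> f a v != f a w -> f b v != f b w ->
  c != a -> c != b -> f c w = f c v.
Proof.
move=> sc ab Ha Hb ca cb; apply/eqP; rewrite eq_sym; apply: contraT => Hc.
have := switching_cost_ge3 Ha Hb Hc ab.
by rewrite ![_ == c]eq_sym ca cb sc => /(_ isT isT).
Qed.

Lemma cost2_moves (v w : {ffun 'I_k -> nat}) (s t i : 'I_k) (c : 'I_n) :
  switching_cost f v w = 2 -> intermediate_task f s t i v w ->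
  [\/ f c w = f c v, f c v = s /\ f c w = i | f c v = i /\ f c w = t].
Proof.
move=> sc [_ [_ [a [b [ab [[Ha [Ha' si]] [Hb [Hb' it]]]]]]]].
have [->|ca] := eqVneq c a; first by apply: Or32.
have [->|cb] := eqVneq c b; first by apply: Or33.
apply: Or31; apply: (cost2_fixes_others sc ab) => //.
- by rewrite Ha Ha'.
- by rewrite Hb Hb'.
Qed.

Lemma cost2_keeps (v w : {ffun 'I_k -> nat}) (s t i : 'I_k) (c : 'I_n) :
  switching_cost f v w = 2 -> intermediate_task f s t i v w ->
  f c v != s -> f c v != i -> f c w = f c v.
Proof.
move=> sc I cs ci; case: (cost2_moves c sc I) => [//|[E _]|[E _]].
- by move: cs; rewrite E eqxx.
- by move: ci; rewrite E eqxx.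
Qed.

Lemma cost2_from_source (v w : {ffun 'I_k -> nat}) (s t i : 'I_k) (c : 'I_n) :
  switching_cost f v w = 2 -> intermediate_task f s t i v w ->
  f c v = s -> f c w \in [:: s; i].
Proof.
move=> sc I cs; rewrite !inE; case: (cost2_moves c sc I) => [->|[_ ->]|[ci _]].
- by rewrite cs eqxx.
- by rewrite eqxx orbT.
- by case: I => i_s _; move: i_s; rewrite -ci cs eqxx.
Qed.

End Switching.

Lemma st_adjacent_adjacent (k : nat) (s t : 'I_k) (v1 v2 : {ffun 'I_k -> nat}) :
  st_adjacent s t v1 v2 -> adjacent v1 v2.
Proof.
case=> st [pos [Es [Et Eo]]].
rewrite /adjacent /l1dist (bigD1 s) // (bigD1 t) 1?eq_sym //= big1.
  by rewrite Es Et; apply/eqP; lia.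
by move=> j /andP [js jt]; rewrite Eo // subnn.
Qed.

Lemma st_adjacent_common_source (k : nat) (s t1 t2 : 'I_k)
    (v v1 v2 : {ffun 'I_k -> nat}) :
  st_adjacent s t1 v v1 -> st_adjacent s t2 v v2 -> t1 != t2 ->
  st_adjacent t1 t2 v1 v2.
Proof.
case=> st1 [_ [E1s [E1t E1o]]] [st2 [_ [E2s [E2t E2o]]]] t12.
have v2t1 : v2 t1 = v t1 by rewrite E2o // eq_sym.
have v1t2 : v1 t2 = v t2 by rewrite E1o // eq_sym.
split=> //; split; first by rewrite E1t.
split; first by rewrite v2t1 E1t.
split; first by rewrite E2t v1t2.
move=> j jt1 jt2; have [->|js] := eqVneq j s; first by rewrite E1s E2s.
by rewrite E1o // E2o.
Qed.

Lemma cost2_detours_share (n k : nat) (f : 'I_n -> {ffun 'I_k -> nat} -> 'I_k)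
    (v v1 v2 : {ffun 'I_k -> nat}) (s t1 t2 i1 i2 : 'I_k) :
  max_switching_cost_le f 2 -> demand_vec n v1 -> demand_vec n v2 ->
  st_adjacent s t1 v v1 -> switching_cost f v v1 = 2 -> intermediate_task f s t1 i1 v v1 ->
  st_adjacent s t2 v v2 -> switching_cost f v v2 = 2 -> intermediate_task f s t2 i2 v v2 ->
  i1 != i2 -> t1 != t2 -> False.
Proof.
move=> max2 dv1 dv2 A1 sc1 I1 A2 sc2 I2 i12 t12.
have adj : adjacent v1 v2 by apply: st_adjacent_adjacent (st_adjacent_common_source A1 A2 t12).
have I1' := I1; have I2' := I2.
case: I1' => i1s [_ [a1 [b1 [ab1 [[Ha1 [Ha1' _]] [Hb1 [Hb1' i1t1]]]]]]].
case: I2' => i2s [_ [a2 [b2 [_ [_ [Hb2 [Hb2' i2t2]]]]]]].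
have neq (a b : 'I_n) : f a v != f b v -> a != b by apply: contraNneq => ->.
have Fb1 : f b1 v2 = i1 by rewrite (cost2_keeps sc2 I2) Hb1.
have Fb2 : f b2 v1 = i2 by rewrite (cost2_keeps sc1 I1) Hb2 // eq_sym.
(* The (s,i1)-agent is at s or i2 in v2, never at i1. *)
have Fa1 : f a1 v1 != f a1 v2.
  rewrite Ha1'; move: (cost2_from_source sc2 I2 Ha1).
  by rewrite !inE => /orP [] /eqP ->; rewrite // eq_sym.
have three : 3 <= switching_cost f v1 v2.
  apply: (switching_cost_ge3 (b := b1) (c := b2) Fa1) => //.
  - by rewrite Hb1' Fb1 eq_sym.
  - by rewrite Fb2 Hb2'.
  - by apply: neq; rewrite Ha1 Hb2 eq_sym.
  - by apply: neq; rewrite Hb1 Hb2.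
by have := leq_trans three (max2 _ _ dv1 dv2 adj).
Qed.

Theorem lemma4p6 (n k : nat) (f : 'I_n -> {ffun 'I_k -> nat} -> 'I_k) :
  4 <= n -> 5 <= k ->
  satisfies_demand f ->
  max_switching_cost_le f 2 ->
  forall (v v1 v2 : {ffun 'I_k -> nat}) (s t1 t2 i1 i2 : 'I_k),
    demand_vec n v -> demand_vec n v1 -> demand_vec n v2 ->
    st_adjacent s t1 v v1 -> switching_cost f v v1 = 2 -> intermediate_task f s t1 i1 v v1 ->
    st_adjacent s t2 v v2 -> switching_cost f v v2 = 2 -> intermediate_task f s t2 i2 v v2 ->
    ~~ uniq [:: s; i1; t1; i2; t2].
Proof.
move=> _ _ _ max2 v v1 v2 s t1 t2 i1 i2 _ dv1 dv2 A1 sc1 I1 A2 sc2 I2.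
apply/negP; rewrite /= !inE !negb_or => /and4P [_ /and3P [_ i12 _] /andP [_ t12] _].
exact: (cost2_detours_share max2 dv1 dv2 A1 sc1 I1 A2 sc2 I2 i12 t12).
Qed.
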